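(* Let $P=\{p_1,\dots,p_n\}\subset\mathbb{R}^2$ be in general position, $n\ge 3$. (a) The expansion cone $\bar X_0(P)$ is a pointed polyhedral cone (the origin is a vertex) of full dimension $2n-3$ in the subspace of normalized motions. (b) Let $v\in\bar X_0(P)$ and let $E(v)=\{ij:\langle p_i-p_j,v_i-v_j\rangle=0\}$. If $E(v)$ contains (i) two crossing edges, or (ii) a set of edges incident to a common vertex $p$ such that no angle at $p$ between consecutive edges of this set exceeds $\pi$, or (iii) all edges of the boundary of a convex polygon whose vertices are points of $P$, then $E(v)$ contains all edges of the complete graph on the endpoints of the involved edges; in case (iii) this complete graph also includes all points of $P$ lying inside the convex polygon.
   Context: General position: no three points collinear. Infinitesimal motions $v=(v_1,\dots,v_n)\in(\mathbb{R}^2)^n$ are normalized by $v_1^1=v_1^2=v_2^1=0$ (superscripts are coordinates; $p_1,p_2$ have different $y$-coordinates). The expansion cone $\bar X_0(P)$ is the set of normalized $v$ with $\langle p_i-p_j,v_i-v_j\rangle\ge0$ for all $i<j$ (expansive motions). *)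

From mathcomp Require Import all_boot all_order all_algebra.
Set Implicit Arguments. Unset Strict Implicit. Unset Printing Implicit Defensive.
Import Order.TTheory GRing.Theory Num.Theory.
Local Open Scope ring_scope.

Section Defs.
Variable R : realFieldType.

Definition pt := (R * R)%type.

Definition psub (a b : pt) : pt := (a.1 - b.1, a.2 - b.2).
Definition dot (a b : pt) : R := a.1 * b.1 + a.2 * b.2.
(* determinant det(a, b) = a.x b.y - a.y b.x  (> 0 iff b is counterclockwise of a
   within an angle in (0, pi)) *)
Definition det (a b : pt) : R := a.1 * b.2 - a.2 * b.1.

Variable n : nat.
Implicit Types (p v : 'I_n -> pt).

Definition general_position p : Prop :=
  forall i j k : 'I_n, i != j -> j != k -> i != k ->
    det (psub (p j) (p i)) (psub (p k) (p i)) != 0.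

(* normalization v_1^1 = v_1^2 = v_2^1 = 0 ; p_1 is index 0, p_2 is index 1 *)
Definition normalized v : Prop :=
  forall i : 'I_n, (val i = 0%N -> v i = (0, 0)) /\ (val i = 1%N -> (v i).1 = 0).

Definition edge_val p v (i j : 'I_n) : R := dot (psub (p i) (p j)) (psub (v i) (v j)).

Definition expansive p v : Prop := forall i j : 'I_n, (i < j)%N -> 0 <= edge_val p v i j.

Definition expansion_cone p v : Prop := normalized v /\ expansive p v.

Definition in_E p v (i j : 'I_n) : Prop := i != j /\ edge_val p v i j = 0.

Definition contains_complete p v (A : 'I_n -> Prop) : Prop :=
  forall i j, A i -> A j -> i != j -> in_E p v i j.

Definition crossing p (i j k l : 'I_n) : Prop :=
  uniq [:: i; j; k; l] /\
  exists s t : R, [/\ 0 <= s <= 1, 0 <= t <= 1 &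
    ((1 - s) * (p i).1 + s * (p j).1 = (1 - t) * (p k).1 + t * (p l).1 /\
     (1 - s) * (p i).2 + s * (p j).2 = (1 - t) * (p k).2 + t * (p l).2)].

(* the counterclockwise angle from direction a to direction b lies in (0, pi] *)
Definition ccw_angle_le_pi (a b : pt) : Prop :=
  0 < det a b \/ (det a b = 0 /\ dot a b < 0).

(* The edges {c s : s in S} at the common vertex p_c have no angle between
   consecutive edges exceeding pi: for every edge c s, the next edge c t
   counterclockwise (the one with smallest ccw angle) is at angle <= pi,
   i.e. some edge c t (t in S) is at ccw angle in (0, pi] from c s. *)
Definition star_no_big_angle p (c : 'I_n) (S : pred 'I_n) : Prop :=
  forall s, S s -> exists t, S t /\
    ccw_angle_le_pi (psub (p s) (p c)) (psub (p t) (p c)).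

Definition poly_edges (q : seq 'I_n) : seq ('I_n * 'I_n) :=
  zip q (rot 1 q).

(* q lists (counterclockwise) the vertices of a convex polygon:
   at least 3 distinct vertices, every other vertex strictly left of every edge *)
Definition convex_polygon p (q : seq 'I_n) : Prop :=
  (3 <= size q)%N /\ uniq q /\
  forall e, e \in poly_edges q -> forall m, m \in q -> m != e.1 -> m != e.2 ->
    0 < det (psub (p e.2) (p e.1)) (psub (p m) (p e.1)).

Definition in_polygon p (q : seq 'I_n) (m : 'I_n) : Prop :=
  forall e, e \in poly_edges q -> 0 <= det (psub (p e.2) (p e.1)) (psub (p m) (p e.1)).

End Defs.

From mathcomp Require Import all_boot all_order all_algebra.
From mathcomp Require Import ring lra zify.
Import Order.TTheory GRing.Theory Num.Theory.
Set Implicit Arguments. Unset Strict Implicit. Unset Printing Implicit Defensive.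
Local Open Scope ring_scope.

(* An edge ij lies in E(v) exactly when v moves p_i and p_j rigidly to first order; the
   pair then has an angular velocity.  If ij and ik both lie in E(v), the length of jk
   changes at the rate (omega_ik - omega_ij) det(p_j - p_i, p_k - p_i), so expansiveness
   makes the angular velocity monotone as one turns counterclockwise.  Around a star
   without reflex angles, and along the boundary of a convex polygon, this monotonicity
   is cyclic: all angular velocities agree and v is rigid on the configuration.  A point
   m inside the polygon is then pinned, since no nonzero velocity of m can expand its
   distance to every vertex.  For crossing edges ij and kl meeting at
   (1-s) p_i + s p_j = (1-t) p_k + t p_l, the four cross edges give a positive
   combination of expansion rates equal to (1-s)s e_ij + (1-t)t e_kl = 0.
   If v and -v are both expansive, every edge lies in E(v) and the normalization kills
   v; the dilation, turned so as to be normalized, expands every edge strictly and is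
   an interior point of the cone. *)

Section PlaneGeometry.
Variable R : realFieldType.
Implicit Types (a b d u w x y z m : pt R).

Definition padd a b : pt R := (a.1 + b.1, a.2 + b.2).

(* the velocity of the tip of [d] under a rotation about its origin at angular speed [s] *)
Definition rotv (s : R) d : pt R := (- (s * d.2), s * d.1).

(* the angular velocity of the segment [x, y] when x and y move with velocities u and w *)
Definition omega x y u w : R := det (psub y x) (psub w u) / dot (psub y x) (psub y x).

Lemma omegaC x y u w : omega x y u w = omega y x w u.
Proof. by rewrite /omega; congr (_ / _); rewrite /det /dot /psub /=; ring. Qed.

Lemma detC a b : det a b = - det b a.
Proof. rewrite /det; ring. Qed.

Lemma det_psubC x y z : det (psub x y) (psub z y) = - det (psub y x) (psub z x).
Proof. rewrite /det /psub /=; ring. Qed.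

Lemma dot_psub_gt0 x y : x != y -> 0 < dot (psub x y) (psub x y).
Proof.
case: x y => [x1 x2] [y1 y2] hxy; rewrite /dot /psub /=.
have sqr_gt0 (r : R) : r != 0 -> 0 < r * r by move=> ?; rewrite -expr2 exprn_even_gt0.
have [e1|n1] := eqVneq x1 y1.
  have [e2|n2] := eqVneq x2 y2; first by rewrite e1 e2 eqxx in hxy.
  have := sqr_gt0 (x2 - y2); rewrite subr_eq0 => /(_ n2).
  by rewrite e1 subrr mul0r add0r.
have := sqr_gt0 (x1 - y1); rewrite subr_eq0 => /(_ n1).
by have := sqr_ge0 (x2 - y2); rewrite expr2; lra.
Qed.

Lemma perp_eq_rotv d u : dot d u = 0 -> dot d d != 0 -> u = rotv (det d u / dot d d) d.
Proof.
case: d u => [d1 d2] [u1 u2]; rewrite /dot /det /rotv /= => hdu hdd.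
have E1 : u1 * (d1 * d1 + d2 * d2) = - (d1 * u2 - d2 * u1) * d2.
  by rewrite -[RHS]addr0 -[0 in RHS](mulr0 d1) -hdu; ring.
have E2 : u2 * (d1 * d1 + d2 * d2) = (d1 * u2 - d2 * u1) * d1.
  by rewrite -[RHS]addr0 -[0 in RHS](mulr0 d2) -hdu; ring.
by congr pair; apply: (mulIf hdd); rewrite ?E1 ?E2; field.
Qed.

Lemma dot_eq0_det_neq0 a b x : dot a x = 0 -> dot b x = 0 -> det a b != 0 -> x = (0, 0).
Proof.
case: a b x => [a1 a2] [b1 b2] [x1 x2]; rewrite /dot /det /= => hax hbx hab.
have E1 : (a1 * b2 - a2 * b1) * x1 = b2 * (a1 * x1 + a2 * x2) - a2 * (b1 * x1 + b2 * x2) by ring.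
have E2 : (a1 * b2 - a2 * b1) * x2 = a1 * (b1 * x1 + b2 * x2) - b1 * (a1 * x1 + a2 * x2) by ring.
by rewrite hax hbx !mulr0 subr0 in E1 E2; congr pair; apply: (mulfI hab); rewrite mulr0.
Qed.

Lemma dot_hinge x y z u w t :
  dot (psub y x) (psub w u) = 0 -> dot (psub z x) (psub t u) = 0 ->
  x != y -> x != z ->
  dot (psub y z) (psub w t) = (omega x z u t - omega x y u w) * det (psub y x) (psub z x).
Proof.
move=> hy hz xy xz.
have nzy : dot (psub y x) (psub y x) != 0 by rewrite gt_eqF // dot_psub_gt0 // eq_sym.
have nzz : dot (psub z x) (psub z x) != 0 by rewrite gt_eqF // dot_psub_gt0 // eq_sym.
have := perp_eq_rotv hy nzy; have := perp_eq_rotv hz nzz; rewrite /omega.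
set sy := (_ / _); set sz := (_ / _); clearbody sy sz.
case: x y z u w t {xy xz nzy nzz hy hz} => [? ?] [? ?] [? ?] [u1 u2] [w1 w2] [t1 t2].
rewrite /psub /rotv /dot /det /= => -[Et1 Et2] [Ew1 Ew2].
have -> : w1 = u1 + (w1 - u1) by ring.
have -> : w2 = u2 + (w2 - u2) by ring.
have -> : t1 = u1 + (t1 - u1) by ring.
have -> : t2 = u2 + (t2 - u2) by ring.
rewrite Ew1 Ew2 Et1 Et2; ring.
Qed.

Lemma det_eq0_of_collinear x y z (r : R) :
  x = ((1 - r) * y.1 + r * z.1, (1 - r) * y.2 + r * z.2) -> det (psub y x) (psub z x) = 0.
Proof. by case: y z => [? ?] [? ?] ->; rewrite /det /psub /=; ring. Qed.

Lemma dot_self_gt0 u : u != (0, 0) -> 0 < dot u u.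
Proof. by have := @dot_psub_gt0 u (0, 0); rewrite /psub /= !subr0; case: u. Qed.

(* [dot u x / det u x] is the cotangent of the angle from u to x *)
Lemma ccw_cot_lt u x y : 0 < det u x -> 0 < det u y -> 0 < det x y ->
  dot u y / det u y < dot u x / det u x.
Proof.
move=> hx hy hxy; rewrite -subr_gt0.
have u0 : u != (0, 0) by apply: contraTneq hx => ->; rewrite /det /= !mul0r subrr ltxx.
have -> : dot u x / det u x - dot u y / det u y = dot u u * det x y / (det u x * det u y).
  move: (gt_eqF hx) (gt_eqF hy); rewrite /dot /det => hx0 hy0; field.
  by rewrite hx0 hy0.
by rewrite divr_gt0 ?mulr_gt0 ?dot_self_gt0.
Qed.

(* barycentric coordinates of m in the triangle z a b, applied to y |-> <y - m, w> *)
Lemma det_barycentric z a b m w :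
  det (psub a z) (psub b z) * - dot (psub a m) w =
  det (psub a z) (psub m z) * (dot (psub b m) w - dot (psub a m) w) +
  det (psub b a) (psub m a) * (dot (psub z m) w - dot (psub a m) w).
Proof. rewrite /det /dot /psub /=; ring. Qed.

Lemma norm1_psub_gt0 x y : x != y -> 0 < `|x.1 - y.1| + `|x.2 - y.2|.
Proof.
case: x y => [x1 x2] [y1 y2] hxy /=.
have [e1|n1] := eqVneq x1 y1.
  have [e2|n2] := eqVneq x2 y2; first by rewrite e1 e2 eqxx in hxy.
  by rewrite ltr_pwDr ?normr_gt0 ?subr_eq0.
by rewrite ltr_pwDl ?normr_gt0 ?subr_eq0.
Qed.

Lemma sqr_add_perturb_ge0 (x y e1 e2 eps : R) :
  `|e1| <= 2 * eps -> `|e2| <= 2 * eps -> 4 * eps <= `|x| + `|y| ->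
  0 <= x * x + y * y + x * e1 + y * e2.
Proof.
have perturb (r e : R) : `|e| <= 2 * eps -> - (`|r| * (2 * eps)) <= r * e.
  move=> he; rewrite lerNl; apply: le_trans (ler_norm _) _.
  by rewrite normrN normrM ler_wpM2l.
move=> /(perturb x) hx /(perturb y) hy hxy.
rewrite -!expr2 -(real_normK (num_real x)) -(real_normK (num_real y)) !expr2.
have := normr_ge0 x; have := normr_ge0 y.
have := sqr_ge0 (`|x| - `|y|); rewrite expr2; nra.
Qed.
End PlaneGeometry.

Definition cyc_succ (k i : nat) : nat := if (i.+1 < k)%N then i.+1 else 0%N.

Lemma cyc_succ_lt k i : (i < k)%N -> (cyc_succ k i < k)%N.
Proof. by rewrite /cyc_succ; case: ifP => ? ?; lia. Qed.

Lemma cyc_succ_onto k j : (j < k)%N -> exists2 i, (i < k)%N & cyc_succ k i = j.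
Proof.
rewrite /cyc_succ; case: j => [|j] jk.
  by exists k.-1; [lia | case: ifP => ?; lia].
by exists j; [lia | case: ifP => ?; lia].
Qed.

Lemma cyc_succ_neq k i : (2 < k)%N -> (i < k)%N ->
  [/\ cyc_succ k i != i, cyc_succ k (cyc_succ k i) != cyc_succ k i
    & cyc_succ k (cyc_succ k i) != i].
Proof. by rewrite /cyc_succ => k2 ik; case: ifP => h1; case: ifP => h2; split; apply/eqP; lia. Qed.

Section Motions.
Variables (R : realFieldType) (n : nat) (p : 'I_n -> pt R).
Hypothesis p_gp : general_position p.
Hypothesis n_gt2 : (2 < n)%N.

Let i0 : 'I_n := Ordinal (ltn_trans (isT : (0 < 2)%N) n_gt2).
Let i1 : 'I_n := Ordinal (ltn_trans (isT : (1 < 2)%N) n_gt2).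
Implicit Types (v : 'I_n -> pt R) (i j : 'I_n).

Lemma edge_valC v i j : edge_val p v i j = edge_val p v j i.
Proof. rewrite /edge_val /dot /psub /=; ring. Qed.

Lemma expansive_edge_ge0 v : expansive p v -> forall i j, 0 <= edge_val p v i j.
Proof.
move=> hv i j; case: (ltngtP i j) => [/hv //|/hv|/val_inj ->]; first by rewrite edge_valC.
by rewrite /edge_val /dot /psub /= !subrr !mulr0 addr0.
Qed.

Lemma edge_val_rigid v c s i j :
  edge_val p (fun k => padd (padd (v k) c) (rotv s (p k))) i j = edge_val p v i j.
Proof. rewrite /edge_val /padd /rotv /dot /psub /=; ring. Qed.

Lemma gp_injective : injective p.
Proof.
move=> i j pij; apply/eqP; apply: contraT => ij.
have [k] : exists k, k \notin [:: i; j].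
  apply/existsP; apply: contraTT n_gt2; rewrite negb_exists -leqNgt => /forallP all_ij.
  rewrite -[n]card_ord -[2%N]/(size [:: i; j]); apply: leq_trans (card_size _).
  by apply/subset_leq_card/subsetP => k _; have := all_ij k; rewrite negbK.
rewrite !inE negb_or => /andP[ki kj].
have := p_gp (k := k) ij; rewrite ![_ == k]eq_sym ki kj pij => /(_ isT isT).
by rewrite /det /psub /= !subrr !mul0r subrr eqxx.
Qed.

Lemma expansive_opp_edge_eq0 v :
  expansive p v -> expansive p (fun i => (- (v i).1, - (v i).2)) ->
  forall i j, edge_val p v i j = 0.
Proof.
move=> /expansive_edge_ge0 hv /expansive_edge_ge0 hv' i j.
have := hv' i j; have -> : edge_val p (fun i => (- (v i).1, - (v i).2)) i j = - edge_val p v i j.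
  by rewrite /edge_val /dot /psub /=; ring.
by rewrite oppr_ge0 => hle; apply/eqP; rewrite eq_le hle hv.
Qed.

Hypothesis p01_y : forall i j : 'I_n, val i = 0%N -> val j = 1%N -> (p i).2 != (p j).2.

Lemma normalized_rigid_eq0 v : normalized v ->
  (forall i j, edge_val p v i j = 0) -> forall i, v i = (0, 0).
Proof.
move=> hnv rig i.
have v0 : v i0 = (0, 0) by case: (hnv i0) => ->.
have v1 : v i1 = (0, 0).
  have := (hnv i1).2 erefl; have := rig i0 i1; have := p01_y (i := i0) (j := i1) erefl erefl.
  rewrite /edge_val /dot /psub v0 /=; case: (v i1) => a b /= hy e ha; rewrite ha in e *.
  move/eqP: e; rewrite !subrr !mulr0 !add0r mulrN oppr_eq0 mulf_eq0 subr_eq0 (negbTE hy).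
  by move=> /eqP ->.
have [->|ni0] := eqVneq i i0; first exact: v0.
have [->|ni1] := eqVneq i i1; first exact: v1.
have hdet : det (psub (p i) (p i0)) (psub (p i) (p i1)) != 0.
  have := p_gp (k := i) (isT : i0 != i1); rewrite ![_ == i]eq_sym ni0 ni1 => /(_ isT isT).
  by apply: contra_neq => <-; rewrite /det /psub /=; ring.
have := rig i i0; have := rig i i1; rewrite /edge_val v0 v1 => e1 e0.
have := dot_eq0_det_neq0 e0 e1 hdet.
by case: (v i) => a b; rewrite /psub /= !subr0.
Qed.

Lemma expansion_cone_interior :
  exists v, expansion_cone p v /\ exists eps : R, 0 < eps /\
    forall w, normalized w ->
      (forall i, `|(w i).1 - (v i).1| < eps /\ `|(w i).2 - (v i).2| < eps) ->
      expansion_cone p w.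
Proof.
pose o := p i0.
have dy0 : (p i1).2 - o.2 != 0 by rewrite subr_eq0 eq_sym; apply: p01_y.
pose s := ((p i1).1 - o.1) / ((p i1).2 - o.2).
(* the dilation about p_1, turned about p_1 so that p_2 moves vertically *)
pose v0 i := padd (padd (p i) (- o.1 + s * o.2, - o.2 - s * o.1)) (rotv s (p i)).
have v0_edge i j : edge_val p v0 i j = dot (psub (p i) (p j)) (psub (p i) (p j)).
  by rewrite edge_val_rigid.
pose g (ij : 'I_n * 'I_n) : R := `|(p ij.1).1 - (p ij.2).1| + `|(p ij.1).2 - (p ij.2).2|.
have [[a b] /= ab gmin] := @arg_minP _ _ _ (i0, i1) (fun ij => ij.1 != ij.2) g isT.
have g_gt0 : 0 < g (a, b) by apply/norm1_psub_gt0; rewrite (inj_eq gp_injective).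
exists v0; split.
  split; last by move=> i j _; rewrite v0_edge /dot; apply: addr_ge0; apply: sqr_ge0.
  move=> i; split=> hi.
    have -> : i = i0 by apply: val_inj.
    by rewrite /v0 /padd /rotv /o /=; congr pair; ring.
  have -> : i = i1 by apply: val_inj.
  by rewrite /v0 /padd /rotv /s /=; field.
exists (g (a, b) / 4); split=> [|w wn close]; first by rewrite divr_gt0.
split=> // i j lt_ij.
have ij : i != j by rewrite neq_ltn lt_ij.
set e1 := ((w i).1 - (v0 i).1) - ((w j).1 - (v0 j).1).
set e2 := ((w i).2 - (v0 i).2) - ((w j).2 - (v0 j).2).
have -> : edge_val p w i j = edge_val p v0 i j + ((p i).1 - (p j).1) * e1 + ((p i).2 - (p j).2) * e2.
  by rewrite /edge_val /dot /psub /e1 /e2 /=; ring.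
rewrite v0_edge; apply: sqr_add_perturb_ge0 (g (a, b) / 4) _ _ _.
- have [c1 _] := close i; have [c2 _] := close j.
  by apply: le_trans (ler_normB _ _) _; lra.
- have [_ c1] := close i; have [_ c2] := close j.
  by apply: le_trans (ler_normB _ _) _; lra.
- by have := gmin (i, j) ij; rewrite /g /=; lra.
Qed.

Lemma gp_off_line a b c (r : R) : a != b -> b != c -> a != c ->
  p a != ((1 - r) * (p b).1 + r * (p c).1, (1 - r) * (p b).2 + r * (p c).2).
Proof.
move=> ab bc ac; apply/eqP => /det_eq0_of_collinear/eqP.
by apply/negP; apply: p_gp.
Qed.

Lemma crossing_params_open i j k l : crossing p i j k l ->
  exists s t : R, [/\ 0 < s < 1, 0 < t < 1,
    (1 - s) * (p i).1 + s * (p j).1 = (1 - t) * (p k).1 + t * (p l).1 &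
    (1 - s) * (p i).2 + s * (p j).2 = (1 - t) * (p k).2 + t * (p l).2].
Proof.
move=> [uniq_ijkl [s [t [/andP[s0 s1] /andP[t0 t1] [e1 e2]]]]].
move: uniq_ijkl; rewrite /= !inE !negb_or.
move=> /andP[/andP[ij /andP[ik il]] /andP[/andP[jk jl] /andP[kl _]]].
have E : ((1 - s) * (p i).1 + s * (p j).1, (1 - s) * (p i).2 + s * (p j).2) =
    ((1 - t) * (p k).1 + t * (p l).1, (1 - t) * (p k).2 + t * (p l).2) by rewrite e1 e2.
have off a b c r : a != b -> b != c -> a != c ->
    ((1 - r) * (p b).1 + r * (p c).1, (1 - r) * (p b).2 + r * (p c).2) = p a -> False.
  by move=> ab bc ac /esym; apply/eqP/gp_off_line.
exists s, t; split=> //; rewrite !lt_neqAle ?s0 ?s1 ?t0 ?t1 !andbT; apply/andP; split;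
  apply/eqP => st; move: E.
- rewrite -st subr0 !mul1r !mul0r !addr0 -surjective_pairing => /esym; exact: off.
- rewrite st subrr !mul1r !mul0r !add0r -surjective_pairing => /esym; exact: off.
- rewrite -st subr0 !mul1r !mul0r !addr0 -surjective_pairing.
  by apply: off; rewrite // eq_sym.
- rewrite st subrr !mul1r !mul0r !add0r -surjective_pairing.
  by apply: off; rewrite // eq_sym.
Qed.

Lemma edge_val_crossing v i j k l (s t : R) :
  (1 - s) * (p i).1 + s * (p j).1 = (1 - t) * (p k).1 + t * (p l).1 ->
  (1 - s) * (p i).2 + s * (p j).2 = (1 - t) * (p k).2 + t * (p l).2 ->
  (1 - s) * s * edge_val p v i j + (1 - t) * t * edge_val p v k l =
  (1 - s) * (1 - t) * edge_val p v i k + (1 - s) * t * edge_val p v i l +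
  s * (1 - t) * edge_val p v j k + s * t * edge_val p v j l.
Proof.
move=> e1 e2; apply/eqP; rewrite -subr_eq0; apply/eqP.
transitivity (- (((1 - s) * (v i).1 + s * (v j).1 - (1 - t) * (v k).1 - t * (v l).1) *
                 ((1 - s) * (p i).1 + s * (p j).1 - ((1 - t) * (p k).1 + t * (p l).1)) +
                 ((1 - s) * (v i).2 + s * (v j).2 - (1 - t) * (v k).2 - t * (v l).2) *
                 ((1 - s) * (p i).2 + s * (p j).2 - ((1 - t) * (p k).2 + t * (p l).2)))).
  by rewrite /edge_val /dot /psub /=; ring.
by rewrite e1 e2 !subrr !mulr0 addr0 oppr0.
Qed.

Lemma crossing_complete v i j k l : expansive p v ->
  crossing p i j k l -> in_E p v i j -> in_E p v k l ->
  contains_complete p v (fun m => m \in [:: i; j; k; l]).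
Proof.
move=> /expansive_edge_ge0 ge cr [ij Eij] [kl Ekl].
have [s [t [/andP[s0 s1] /andP[t0 t1] e1 e2]]] := crossing_params_open cr.
have s' : 0 < 1 - s by rewrite subr_gt0. have t' : 0 < 1 - t by rewrite subr_gt0.
have := edge_val_crossing v e1 e2; rewrite Eij Ekl !mulr0 addr0 => /esym sum0.
have weighted (a b : R) x y : 0 < a -> 0 < b -> 0 <= a * b * edge_val p v x y.
  by move=> a0 b0; apply: mulr_ge0; [apply/ltW/mulr_gt0 | apply: ge].
move: (weighted _ _ i k s' t') (weighted _ _ i l s' t0).
move: (weighted _ _ j k s0 t') (weighted _ _ j l s0 t0) => jl_ge0 jk_ge0 il_ge0 ik_ge0.
have unweight (a b : R) x y : 0 < a -> 0 < b -> a * b * edge_val p v x y = 0 -> edge_val p v x y = 0.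
  by move=> a0 b0 /eqP; rewrite !mulf_eq0 (gt_eqF a0) (gt_eqF b0) => /eqP.
have Eik : edge_val p v i k = 0 by apply: (unweight _ _ _ _ s' t'); lra.
have Eil : edge_val p v i l = 0 by apply: (unweight _ _ _ _ s' t0); lra.
have Ejk : edge_val p v j k = 0 by apply: (unweight _ _ _ _ s0 t'); lra.
have Ejl : edge_val p v j l = 0 by apply: (unweight _ _ _ _ s0 t0); lra.
move=> x y; rewrite !inE => /or4P[] /eqP-> /or4P[] /eqP-> xy; split=> //;
  rewrite ?eqxx // in xy; by [|rewrite edge_valC].
Qed.

Lemma edge_val_hinge v x y z :
  edge_val p v x y = 0 -> edge_val p v x z = 0 -> x != y -> x != z ->
  edge_val p v y z =
  (omega (p x) (p z) (v x) (v z) - omega (p x) (p y) (v x) (v y)) *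
  det (psub (p y) (p x)) (psub (p z) (p x)).
Proof.
rewrite [edge_val _ _ x y]edge_valC [edge_val _ _ x z]edge_valC => hy hz xy xz.
by apply: dot_hinge; rewrite ?(inj_eq gp_injective).
Qed.

Section Star.
Variables (v : 'I_n -> pt R) (c : 'I_n) (S : pred 'I_n).
Hypotheses (v_exp : expansive p v) (c_notin_S : ~~ S c) (S_star : star_no_big_angle p c S).
Hypothesis S_spokes : forall s, S s -> in_E p v c s.

Let d s := psub (p s) (p c).
Let spin s := omega (p c) (p s) (v c) (v s).

Lemma star_neq_c s : S s -> c != s.
Proof. by move=> Ss; apply: contraNneq c_notin_S => ->. Qed.

Lemma star_edge_val s t : S s -> S t -> edge_val p v s t = (spin t - spin s) * det (d s) (d t).
Proof.
by move=> Ss St; apply: edge_val_hinge; rewrite ?star_neq_c //; [case: (S_spokes Ss)|case: (S_spokes St)].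
Qed.

Lemma star_det_neq0 s t : S s -> S t -> s != t -> det (d s) (d t) != 0.
Proof. by move=> Ss St st; apply: p_gp; rewrite // star_neq_c. Qed.

Lemma star_spin_le s t : S s -> S t -> 0 < det (d s) (d t) -> spin s <= spin t.
Proof.
move=> Ss St hst; have := expansive_edge_ge0 v_exp s t.
by rewrite star_edge_val // pmulr_lge0 // subr_ge0.
Qed.

Lemma star_spin_lt s t : S s -> S t -> spin s < spin t -> 0 < det (d s) (d t).
Proof.
move=> Ss St hst; have st : s != t by apply: contraTneq hst => ->; rewrite ltxx.
rewrite -subr_lt0 in hst; rewrite lt0r star_det_neq0 //=.
by have := expansive_edge_ge0 v_exp t s; rewrite star_edge_val // detC mulrN oppr_ge0 nmulr_rle0.
Qed.

Lemma star_next_ccw s : S s -> exists2 t, S t & 0 < det (d s) (d t).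
Proof.
move=> Ss; have [t [St [//|[det0 dot_neg]]]] := S_star Ss; first by exists t.
have [st|st] := eqVneq s t.
  rewrite -st in dot_neg.
  have : p s != p c by rewrite (inj_eq gp_injective) eq_sym star_neq_c.
  by move/dot_psub_gt0/lt_trans/(_ dot_neg); rewrite ltxx.
by have := star_det_neq0 Ss St st; rewrite /d det0 eqxx.
Qed.

Lemma star_spin_const s t : S s -> S t -> spin s = spin t.
Proof.
move=> Ss St; have [m Sm spin_max] := @arg_maxP _ _ _ s S spin Ss.
suff spin_m u : S u -> spin u = spin m by rewrite !spin_m.
move=> Su; apply/eqP; rewrite eq_le; apply/andP; split; first exact: (spin_max _ Su).
rewrite leNgt; apply/negP => lt_um.
pose M x := S x && (spin x == spin m).
have ccw_M x : M x -> 0 < det (d u) (d x).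
  by case/andP => Sx /eqP ex; apply: star_spin_lt; rewrite // ex.
pose cot x := dot (d u) (d x) / det (d u) (d x).
have Mm : M m by rewrite /M Sm eqxx.
have [ss /andP[Sss /eqP ess] cot_min] := @arg_minP _ _ _ m M cot Mm.
have [w Sw ss_w] := star_next_ccw Sss.
have Mw : M w.
  rewrite /M Sw /= eq_le; apply/andP; split; first exact: (spin_max _ Sw).
  by rewrite -ess star_spin_le.
have := cot_min w Mw; rewrite leNgt => /negP; apply.
have Mss : M ss by rewrite /M Sss ess eqxx.
by apply: ccw_cot_lt => //; apply: ccw_M.
Qed.

Lemma star_complete : contains_complete p v (fun m => (m == c) || S m).
Proof.
move=> x y /orP[/eqP->|Sx] /orP[/eqP->|Sy] xy.
- by rewrite eqxx in xy.
- exact: S_spokes.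
- by case: (S_spokes Sx) => _ Ecx; split; rewrite // edge_valC.
- by split; rewrite // star_edge_val // (star_spin_const Sx Sy) subrr mul0r.
Qed.
End Star.

Lemma poly_edges_nth x0 (q : seq 'I_n) (r : nat) : (r < size q)%N ->
  (nth x0 q r, nth x0 q (cyc_succ (size q) r)) \in poly_edges q.
Proof.
case: q => [|x s] //= hr; rewrite /poly_edges rot1_cons.
apply/(nthP (x0, x0)); exists r; first by rewrite size_zip size_rcons /= minnn.
rewrite nth_zip /= ?size_rcons // nth_rcons /cyc_succ /=; congr pair.
case: ltnP => h1; first by rewrite ltnS h1.
by rewrite (_ : r = size s) ?ltnn ?eqxx //; lia.
Qed.

Section ConvexPolygon.
Variable q : seq 'I_n.
Hypothesis q_convex : convex_polygon p q.
Local Notation k := (size q).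
Local Notation Q r := (nth i0 q r).
Local Notation nx := (cyc_succ (size q)).

Lemma polygon_nth_eq r s : (r < k)%N -> (s < k)%N -> (Q r == Q s) = (r == s).
Proof. by move=> rk sk; rewrite nth_uniq //; case: q_convex => _ []. Qed.

Lemma polygon_triple r : (r < k)%N ->
  [/\ Q r != Q (nx r), Q (nx r) != Q (nx (nx r)) & Q r != Q (nx (nx r))].
Proof.
case: q_convex => k3 _ rk; have r1 := cyc_succ_lt rk; have r2 := cyc_succ_lt r1.
have [e1 e2 e3] := cyc_succ_neq k3 rk.
by rewrite !polygon_nth_eq //; split; rewrite eq_sym.
Qed.

Lemma polygon_turn r : (r < k)%N ->
  0 < det (psub (p (Q (nx r))) (p (Q r))) (psub (p (Q (nx (nx r)))) (p (Q r))).
Proof.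
move=> rk; case: q_convex => _ [_ convex]; have [e1 e2 e3] := polygon_triple rk.
apply: (convex _ (poly_edges_nth i0 rk)) => /=.
- exact/mem_nth/cyc_succ_lt/cyc_succ_lt.
- by rewrite eq_sym.
- by rewrite eq_sym.
Qed.

Lemma polygon_mem_succ a : a \in q -> exists2 r, (r < k)%N & Q (nx r) = a.
Proof.
move=> aq; have [r rk ra] : exists2 r, (r < k)%N & nx r = index a q.
  by apply: cyc_succ_onto; rewrite index_mem.
by exists r; rewrite // ra nth_index.
Qed.

Lemma in_polygon_perp_eq0 m w : in_polygon p q m -> m \notin q ->
  (forall y, y \in q -> dot (psub (p y) (p m)) w <= 0) -> w = (0, 0).
Proof.
move=> m_in m_notin behind; pose psi y := dot (psub (p y) (p m)) w.
have m_neq y : y \in q -> y != m by move=> yq; apply: contraNneq m_notin => <-.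
have q0 : Q 0 \in q by apply: mem_nth; case: q_convex => k3 _; apply: leq_trans k3.
have [a aq psi_max] := @arg_maxP _ _ _ (Q 0) (fun y => y \in q) psi q0.
have [r rk ra] := polygon_mem_succ aq.
have [za ab zb] := polygon_triple rk; have turn := polygon_turn rk.
have za_edge := poly_edges_nth i0 rk; have ab_edge := poly_edges_nth i0 (cyc_succ_lt rk).
have zq : Q r \in q by apply: mem_nth.
have bq : Q (nx (nx r)) \in q by apply/mem_nth/cyc_succ_lt/cyc_succ_lt.
rewrite ra in za ab turn za_edge ab_edge.
set z := Q r in za zb turn za_edge zq *; set b := Q (nx (nx r)) in ab zb turn ab_edge bq *.
have lam_a : 0 < det (psub (p a) (p z)) (psub (p m) (p z)).
  by rewrite lt0r (m_in _ za_edge) andbT; apply: p_gp; rewrite // m_neq.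
have lam_b : 0 <= det (psub (p b) (p a)) (psub (p m) (p a)) by apply: (m_in _ ab_edge).
have := det_barycentric (p z) (p a) (p b) (p m) w; rewrite -!/(psi _).
set D := det _ (psub (p b) (p z)); set La := det _ (psub (p m) (p z)).
set Lb := det _ (psub (p m) (p a)) => E.
have Dt : 0 <= D * - psi a by apply: mulr_ge0; [exact: ltW | rewrite oppr_ge0 behind].
have at_ : La * (psi b - psi a) <= 0.
  by apply: mulr_ge0_le0; [exact: ltW | rewrite subr_le0; exact: (psi_max b bq)].
have bt : Lb * (psi z - psi a) <= 0.
  by apply: mulr_ge0_le0; rewrite // subr_le0; exact: (psi_max z zq).
have /eqP : La * (psi b - psi a) = 0 by lra.
rewrite mulf_eq0 gt_eqF //= subr_eq0 => /eqP psi_ba.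
have /eqP : D * - psi a = 0 by lra.
rewrite mulf_eq0 gt_eqF //= oppr_eq0 => /eqP psi_a0.
apply: (dot_eq0_det_neq0 (b := psub (p b) (p m)) psi_a0); first by rewrite -/(psi b) psi_ba.
by apply: p_gp; rewrite // eq_sym m_neq.
Qed.
End ConvexPolygon.

Section PolygonMotion.
Variables (v : 'I_n -> pt R) (q : seq 'I_n).
Hypotheses (v_exp : expansive p v) (q_convex : convex_polygon p q).
Hypothesis q_sides : forall e, e \in poly_edges q -> in_E p v e.1 e.2.
Local Notation k := (size q).
Local Notation Q r := (nth i0 q r).
Local Notation nx := (cyc_succ (size q)).

Let side_spin r := omega (p (Q r)) (p (Q (nx r))) (v (Q r)) (v (Q (nx r))).

Lemma polygon_side_eq0 r : (r < k)%N -> edge_val p v (Q r) (Q (nx r)) = 0.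
Proof. by move=> rk; case: (q_sides (poly_edges_nth i0 rk)). Qed.

Lemma polygon_spin_step r : (r < k)%N -> side_spin (nx r) <= side_spin r.
Proof.
move=> rk; have [e1 e2 _] := polygon_triple q_convex rk.
have := expansive_edge_ge0 v_exp (Q r) (Q (nx (nx r))).
have hy : edge_val p v (Q (nx r)) (Q r) = 0 by rewrite edge_valC polygon_side_eq0.
have hz : edge_val p v (Q (nx r)) (Q (nx (nx r))) = 0.
  by rewrite polygon_side_eq0 ?cyc_succ_lt.
rewrite eq_sym in e1; rewrite (edge_val_hinge hy hz e1 e2).
rewrite -/(side_spin (nx r)) omegaC -/(side_spin r) det_psubC mulrN oppr_ge0.
by rewrite pmulr_lle0 ?subr_le0 // (polygon_turn q_convex rk).
Qed.

Lemma polygon_spin_const r : (r < k)%N -> side_spin r = side_spin 0.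
Proof.
have k0 : (0 < k)%N by case: q_convex => k3 _; apply: leq_trans k3.
have step r' : (r'.+1 < k)%N -> side_spin r'.+1 <= side_spin r'.
  by move=> r1k; have := polygon_spin_step (ltnW r1k); rewrite /cyc_succ r1k.
have mono (i j : nat) : (i <= j)%N -> (j < k)%N -> side_spin j <= side_spin i.
  elim: j => [|j IH] ij jk; first by move: ij; rewrite leqn0 => /eqP->.
  have [->|ij'] := eqVneq i j.+1; first by [].
  by apply: le_trans (step _ jk) (IH _ (ltnW jk)); rewrite -ltnS ltn_neqAle ij ij'.
move=> rk; apply/eqP; rewrite eq_le mono //=.
have k1 : (k.-1 < k)%N by rewrite ltn_predL.
have := polygon_spin_step k1; rewrite /cyc_succ prednK // ltnn => /le_trans; apply.
by apply: mono; rewrite // -ltnS prednK.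
Qed.

Lemma polygon_rigid :
  exists c s, forall y, y \in q -> padd (padd (v y) c) (rotv s (p y)) = (0, 0).
Proof.
pose s0 := side_spin 0; pose o := Q 0.
exists (psub (rotv s0 (p o)) (v o)), (- s0).
suff W_Q r : (r < k)%N ->
    padd (padd (v (Q r)) (psub (rotv s0 (p o)) (v o))) (rotv (- s0) (p (Q r))) = (0, 0).
  by move=> y yq; rewrite -(nth_index i0 yq); apply: W_Q; rewrite index_mem.
elim: r => [|r IH] rk; first by rewrite /padd /rotv /psub /=; congr pair; ring.
have r1 : nx r = r.+1 by rewrite /cyc_succ rk.
have side := polygon_side_eq0 (ltnW rk); rewrite r1 edge_valC in side.
have nz : dot (psub (p (Q r.+1)) (p (Q r))) (psub (p (Q r.+1)) (p (Q r))) != 0.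
  have [+ _ _] := polygon_triple q_convex (ltnW rk); rewrite r1 => rr1.
  by rewrite gt_eqF // dot_psub_gt0 // (inj_eq gp_injective) eq_sym.
have spin_r : omega (p (Q r)) (p (Q r.+1)) (v (Q r)) (v (Q r.+1)) = s0.
  by rewrite /s0 -(polygon_spin_const (ltnW rk)) /side_spin r1.
move: (IH (ltnW rk)) (perp_eq_rotv side nz); rewrite -[_ / _]/(omega _ _ _ _) spin_r.
case: (v (Q r)) (v (Q r.+1)) (p (Q r)) (p (Q r.+1)) => [? ?] [? ?] [? ?] [? ?].
rewrite /padd /rotv /psub /= !mulNr !mulrBr => -[h1 h2] [h3 h4].
by congr pair; lra.
Qed.

Lemma polygon_complete : contains_complete p v (in_polygon p q).
Proof.
have [c [s W_q]] := polygon_rigid.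
pose W y := padd (padd (v y) c) (rotv s (p y)).
have W_edge x y : edge_val p v x y = edge_val p W x y by rewrite edge_val_rigid.
have W_exp : expansive p W by move=> x y xy; rewrite -W_edge; apply: v_exp.
have W_m m : in_polygon p q m -> W m = (0, 0).
  move=> m_in; have [/W_q //|m_notin] := boolP (m \in q).
  apply: (in_polygon_perp_eq0 q_convex m_in m_notin) => y yq.
  have := expansive_edge_ge0 W_exp m y.
  have Wy : W y = (0, 0) by exact: W_q.
  by rewrite /edge_val Wy /dot /psub /=; lra.
move=> x y x_in y_in xy; split=> //.
by rewrite W_edge /edge_val (W_m x x_in) (W_m y y_in) /dot /psub /= subrr !mulr0 addr0.
Qed.
End PolygonMotion.
End Motions.

Theorem lemma3p2 (R : realFieldType) (n : nat) (p : 'I_n -> pt R) :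
  (3 <= n)%N ->
  general_position p ->
  (forall i j : 'I_n, val i = 0%N -> val j = 1%N -> (p i).2 != (p j).2) ->
  ((forall v, expansion_cone p v -> expansion_cone p (fun i => ((- (v i).1), (- (v i).2))) ->
      forall i, v i = (0, 0)) /\
   (exists v, expansion_cone p v /\ exists eps : R, 0 < eps /\
      forall w, normalized w ->
        (forall i, `|(w i).1 - (v i).1| < eps /\ `|(w i).2 - (v i).2| < eps) ->
        expansion_cone p w)) /\
  (forall v, expansion_cone p v ->
    (forall i j k l : 'I_n, crossing p i j k l -> in_E p v i j -> in_E p v k l ->
       contains_complete p v (fun m => m \in [:: i; j; k; l])) /\
    (forall (c : 'I_n) (S : pred 'I_n), ~~ S c -> star_no_big_angle p c S ->
       (forall s, S s -> in_E p v c s) ->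
       contains_complete p v (fun m => (m == c) || S m)) /\
    (forall q : seq 'I_n, convex_polygon p q ->
       (forall e, e \in poly_edges q -> in_E p v e.1 e.2) ->
       contains_complete p v (in_polygon p q))).
Proof.
move=> n_gt2 p_gp p01_y; split; [split|].
- move=> v [v_norm v_exp] [_ v_exp'].
  exact/(normalized_rigid_eq0 p_gp n_gt2 p01_y v_norm)/expansive_opp_edge_eq0.
- exact: expansion_cone_interior.
- move=> v [_ v_exp]; split; [|split].
  + by move=> i j k l; apply: crossing_complete.
  + by move=> c S; apply: star_complete.
  + by move=> q; apply: polygon_complete.
Qed.
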